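(* Let $\alpha\in(0,1)$, $\beta=1/\alpha$, and $f=f_{M_1}$. Let $(x_n)_{n\ge0}$ be the sequence defined in the context. Then $$x_n=\frac{1}{(\alpha M_0(n)\,n)^{\beta}}+O\Big(\frac{\log n}{n^{1+\beta}}\Big),\qquad\text{where } M_0(n)=\frac1n\sum_{j=1}^nM_1(x_j).$$
   Context: $f_{M_1}(x)=x(1+M_1(x)x^\alpha)$ on $[0,1/2]$, $2x-1$ on $(1/2,1]$, with $M_1(x)=C_0\,2^{-\{c_1^{-1}\log x\}}$ ($\{\cdot\}$ fractional part, $\{x\}=\{-x\}$ for $x<0$), $c_1>0$, and $C_0$ chosen so that $f_{M_1}((1/2)^-)=1$. The discontinuity set in $(0,1/2)$ is $\mathcal C=\{s_\ell=e^{-\ell c_1}:\ell\ge1\}$; at $s_\ell$ the one-sided limits are $f(s_\ell^+)=s_\ell+C_0s_\ell^{1+\alpha}$ and $f(s_\ell^-)=s_\ell+\frac{C_0}2s_\ell^{1+\alpha}$. The sequence $(x_n)$: $x_0=1/2$; given $x_n$, if $x_n\in[f(s_\ell^-),f(s_\ell^+)]$ for some $\ell$ set $x_{n+1}=s_\ell$; otherwise set $x_{n+1}$ to be the unique point of $(0,x_n)$ with $f(x_{n+1})=x_n$. Then $x_n\downarrow0$, $f^k(x_n)\in(0,1/2)$ for $k<n$ and $f^n(x_n)=1/2$ (with one-sided values at discontinuities). Note $M_0(n)\in[C_0/2,C_0]$. *)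

From Stdlib Require Import Reals Lra Lia ClassicalEpsilon.
Open Scope R_scope.

(* Fractional part with the paper's convention {x} = {-x} for x < 0. *)
Definition fracs (y : R) : R :=
  if Rlt_dec y 0 then frac_part (- y) else frac_part y.

Definition M1 (c1 C0 : R) (x : R) : R :=
  C0 * Rpower 2 (- fracs (ln x / c1)).

Definition fM1 (alpha c1 C0 : R) (x : R) : R :=
  if Rle_dec x (1/2) then x * (1 + M1 c1 C0 x * Rpower x alpha)
  else 2 * x - 1.

(* discontinuity points s_l = e^{-l c1} and one-sided limits there *)
Definition s_pt (c1 : R) (l : nat) : R := exp (- INR l * c1).
Definition f_plus (alpha c1 C0 : R) (l : nat) : R :=
  s_pt c1 l + C0 * Rpower (s_pt c1 l) (1 + alpha).
Definition f_minus (alpha c1 C0 : R) (l : nat) : R :=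
  s_pt c1 l + C0 / 2 * Rpower (s_pt c1 l) (1 + alpha).

Definition in_jump (alpha c1 C0 : R) (x : R) : Prop :=
  exists l : nat, (1 <= l)%nat /\ f_minus alpha c1 C0 l <= x <= f_plus alpha c1 C0 l.

(* One backward step: if x lies in a jump interval [f(s_l^-), f(s_l^+)] go to s_l,
   otherwise take the (unique) preimage of x in (0, x). *)
Definition next_pt (alpha c1 C0 : R) (x : R) : R :=
  epsilon (inhabits 0) (fun y =>
    (exists l : nat, (1 <= l)%nat /\
        f_minus alpha c1 C0 l <= x <= f_plus alpha c1 C0 l /\ y = s_pt c1 l)
    \/ (~ in_jump alpha c1 C0 x /\ 0 < y < x /\ fM1 alpha c1 C0 y = x)).

Fixpoint xseq (alpha c1 C0 : R) (n : nat) : R :=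
  match n with
  | O => 1/2
  | S m => next_pt alpha c1 C0 (xseq alpha c1 C0 m)
  end.

Definition M0 (alpha c1 C0 : R) (n : nat) : R :=
  / INR n * sum_f_R0 (fun j => M1 c1 C0 (xseq alpha c1 C0 (S j))) (pred n).

From Stdlib Require Import Reals Ranalysis5 Lra Lia Classical ClassicalEpsilon.
From Coquelicot Require Import Coquelicot.
Open Scope R_scope.

(* With u_n = x_n^(-alpha), a backward step x_n = x_(n+1) (1 + m x_(n+1)^alpha) with
   m in [C0/2, C0] changes u by alpha m + O(x_(n+1)^alpha).  Here m = M1(x_(n+1)) unless
   x_(n+1) is a discontinuity point s_l, and the orbit meets at most O(log n) of those
   among x_1, ..., x_n since x_n >= n^(-1/alpha) up to a constant.  As u_n grows linearly,
   sum_(j <= n) x_j^alpha = O(log n), so u_n = alpha n M0(n) + O(log n); inverting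
   t |-> t^(-1/alpha) at scale n gives the error term O(log n / n^(1 + 1/alpha)). *)

Lemma Rpower_gt0 x p : 0 < Rpower x p.
Proof. apply exp_pos. Qed.

Lemma Rpower_base1 p : Rpower 1 p = 1.
Proof. unfold Rpower; rewrite ln_1, Rmult_0_r; apply exp_0. Qed.

Lemma Rpower_le1 x p : 0 < x <= 1 -> 0 <= p -> Rpower x p <= 1.
Proof.
  intros Hx Hp. rewrite <- (Rpower_base1 p). apply Rle_Rpower_l; lra.
Qed.

Lemma Rpower_opp_le1 x p : 1 <= x -> 0 <= p -> Rpower x (- p) <= 1.
Proof.
  intros Hx Hp. rewrite <- (Rpower_O x) by lra. apply Rle_Rpower; lra.
Qed.

Lemma Rpower_opp_antitone q a b : 0 <= q -> 0 < a <= b -> Rpower b (- q) <= Rpower a (- q).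
Proof.
  intros Hq Hab. rewrite !Rpower_Ropp.
  apply Rinv_le_contravar; [apply Rpower_gt0 | apply Rle_Rpower_l; lra].
Qed.

Lemma Rpower_opp_mvt q a b : 0 < a -> a < b ->
  exists xi, a < xi < b /\
    Rpower b (- q) - Rpower a (- q) = - q * Rpower xi (- q - 1) * (b - a).
Proof.
  intros Ha Hab.
  destruct (MVT_cor2 (fun x => Rpower x (- q)) (fun x => - q * Rpower x (- q - 1)) a b Hab)
    as [c [Hc1 Hc2]].
  - intros c Hc. apply derivable_pt_lim_power. lra.
  - exists c; split; [lra | rewrite Hc1; ring].
Qed.

Lemma Rpower_opp_bernoulli p s : 0 < p -> 1 <= s -> 1 - p * (s - 1) <= Rpower s (- p).
Proof.
  intros Hp Hs. destruct (Req_dec s 1) as [-> | Hs1].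
  { rewrite Rpower_base1. lra. }
  destruct (Rpower_opp_mvt p 1 s) as [xi [Hxi Heq]]; try lra.
  rewrite Rpower_base1 in Heq.
  assert (Hr : Rpower xi (- p - 1) <= 1).
  { replace (- p - 1) with (- (p + 1)) by ring. apply Rpower_opp_le1; lra. }
  assert (p * (s - 1) * Rpower xi (- p - 1) <= p * (s - 1)).
  { rewrite <- (Rmult_1_r (p * (s - 1))) at 2. apply Rmult_le_compat_l; nra. }
  lra.
Qed.

Lemma Rpower_opp_lipschitz_lt q a b c : 0 < q -> 0 < c -> c <= a -> a < b ->
  Rabs (Rpower b (- q) - Rpower a (- q)) <= q * Rpower c (- q - 1) * Rabs (b - a).
Proof.
  intros Hq Hc Ha Hab.
  destruct (Rpower_opp_mvt q a b ltac:(lra) Hab) as [xi [Hxi ->]].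
  rewrite !Rabs_mult, Rabs_Ropp, (Rabs_pos_eq q), (Rabs_pos_eq (Rpower xi _))
    by (try left; try apply Rpower_gt0; lra).
  apply Rmult_le_compat_r; [apply Rabs_pos |].
  apply Rmult_le_compat_l; [lra |].
  replace (- q - 1) with (- (q + 1)) by ring. apply Rpower_opp_antitone; lra.
Qed.

Lemma Rpower_opp_lipschitz q a b c : 0 < q -> 0 < c -> c <= a -> c <= b ->
  Rabs (Rpower b (- q) - Rpower a (- q)) <= q * Rpower c (- q - 1) * Rabs (b - a).
Proof.
  intros Hq Hc Ha Hb. destruct (Rtotal_order a b) as [h | [-> | h]].
  - now apply Rpower_opp_lipschitz_lt.
  - rewrite !Rminus_diag, Rabs_R0. pose proof (Rpower_gt0 c (- q - 1)). nra.
  - rewrite Rabs_minus_sym, (Rabs_minus_sym b a). now apply Rpower_opp_lipschitz_lt.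
Qed.

Lemma Rpower_opp_involutive x a : 0 < x -> 0 < a ->
  Rpower (Rpower x (- a)) (- (1 / a)) = x.
Proof.
  intros Hx Ha. rewrite Rpower_mult.
  replace (- a * - (1 / a)) with 1 by (field; lra). now apply Rpower_1.
Qed.

Lemma ln_le x y : 0 < x -> x <= y -> ln x <= ln y.
Proof.
  intros Hx [Hxy | ->]; [left; now apply ln_increasing | lra].
Qed.

Lemma ln_INR_ge1 n : (3 <= n)%nat -> 1 <= ln (INR n).
Proof.
  intros Hn. rewrite <- (ln_exp 1). apply ln_le; [apply exp_pos |].
  apply Rle_trans with 3; [apply exp_le_3 |].
  replace 3 with (INR 3) by (simpl; ring). now apply le_INR.
Qed.

Lemma ln_ge_1_sub_inv z : 0 < z -> 1 - / z <= ln z.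
Proof.
  intros Hz. pose proof (exp_ineq1_le (- ln z)) as H.
  rewrite exp_Ropp, exp_ln in H by lra. lra.
Qed.

Lemma harmonic_le_ln m : sum_f_R0 (fun j => / INR (S j)) m <= 1 + ln (INR (S m)).
Proof.
  induction m as [| m IH]; [simpl; rewrite ln_1; lra |].
  cbn [sum_f_R0].
  enough (/ INR (S (S m)) <= ln (INR (S (S m))) - ln (INR (S m))) by lra.
  pose proof (lt_0_INR (S m) ltac:(lia)). rewrite (S_INR (S m)).
  rewrite <- ln_div by lra.
  eapply Rle_trans; [| apply ln_ge_1_sub_inv, Rdiv_lt_0_compat; lra].
  right; field; lra.
Qed.

Lemma Rpower_opp_increment a C m y : 0 < a < 1 -> 0 < C -> C / 2 <= m <= C -> 0 < y <= 1 ->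
  let D := Rpower y (- a) - Rpower (y * (1 + m * Rpower y a)) (- a) in
  a * m - a * (a + 1) * C ^ 2 * Rpower y a <= D <= a * m /\
  a * (C / 2) * Rpower (1 + C) (- (2)) <= D.
Proof.
  intros Ha HC Hm Hy D.
  set (v := Rpower y a). set (t := m * v).
  assert (Hv : 0 < v <= 1) by (split; [apply Rpower_gt0 | apply Rpower_le1; lra]).
  assert (Ht : 0 < t <= C) by (unfold t; split; nra).
  destruct (Rpower_opp_mvt a 1 (1 + t)) as [xi [Hxi Heq]]; try lra.
  rewrite Rpower_base1 in Heq.
  set (r := Rpower xi (- a - 1)) in Heq.
  (* D = (1 - (1 + t)^-a) / y^a = a m r, and r is squeezed between (1 + t)^(-a-1) and 1 *)
  assert (HD : D = a * m * r).
  { assert (Hyv : Rpower y (- a) * v = 1).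
    { unfold v. rewrite <- Rpower_plus, Rplus_opp_l. apply Rpower_O; lra. }
    unfold D. fold v t. rewrite <- Rpower_mult_distr by lra.
    replace (Rpower (1 + t) (- a)) with (1 - a * r * t) by lra.
    transitivity (a * m * r * (Rpower y (- a) * v)); [unfold t; ring | rewrite Hyv; ring]. }
  assert (Hr1 : r <= 1).
  { unfold r. replace (- a - 1) with (- (a + 1)) by ring. apply Rpower_opp_le1; lra. }
  assert (Hr2 : Rpower (1 + t) (- (a + 1)) <= r).
  { unfold r. replace (- a - 1) with (- (a + 1)) by ring. apply Rpower_opp_antitone; lra. }
  assert (Hr3 : 1 - (a + 1) * t <= r).
  { pose proof (Rpower_opp_bernoulli (a + 1) (1 + t)) as Hbern.
    replace (1 + t - 1) with t in Hbern by ring.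
    enough (1 - (a + 1) * t <= Rpower (1 + t) (- (a + 1))) by lra. apply Hbern; lra. }
  assert (Hr4 : Rpower (1 + C) (- (2)) <= r).
  { apply Rle_trans with (Rpower (1 + t) (- (2))); [apply Rpower_opp_antitone; lra |].
    apply Rle_trans with (Rpower (1 + t) (- (a + 1))); [apply Rle_Rpower; lra | exact Hr2]. }
  pose proof (Rpower_gt0 (1 + C) (- (2))).
  assert (HmC : m ^ 2 <= C ^ 2) by (apply pow_incr; lra).
  rewrite HD; repeat split.
  - assert (a * m * (1 - (a + 1) * t) <= a * m * r) by (apply Rmult_le_compat_l; nra).
    unfold t in *. assert (a * (a + 1) * m ^ 2 * v <= a * (a + 1) * C ^ 2 * v).
    { apply Rmult_le_compat_r; [lra |]. apply Rmult_le_compat_l; nra. }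
    nra.
  - assert (a * m * r <= a * m * 1) by (apply Rmult_le_compat_l; nra). lra.
  - apply Rle_trans with (a * m * Rpower (1 + C) (- (2))); [apply Rmult_le_compat_r; nra |].
    apply Rmult_le_compat_l; nra.
Qed.

Section BackwardOrbit.

Variables alpha c1 C0 : R.
Hypothesis Halpha : 0 < alpha < 1.
Hypothesis Hc1 : 0 < c1.

Local Notation s := (s_pt c1).
Local Notation M := (M1 c1 C0).
Local Notation f := (fM1 alpha c1 C0).
Local Notation fminus := (f_minus alpha c1 C0).
Local Notation fplus := (f_plus alpha c1 C0).

Lemma ln_s_pt l : ln (s l) = - INR l * c1.
Proof. apply ln_exp. Qed.

Lemma s_pt_gt0 l : 0 < s l.
Proof. apply exp_pos. Qed.

Lemma s_pt_antitone n m : (n <= m)%nat -> s m <= s n.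
Proof.
  intros Hnm. apply le_INR in Hnm. unfold s_pt.
  destruct (Req_dec (INR n) (INR m)) as [-> | Hne]; [lra |].
  left. apply exp_increasing. nra.
Qed.

Lemma s_pt_0 : s 0 = 1.
Proof. unfold s_pt. rewrite <- exp_0. f_equal. simpl. ring. Qed.

Lemma s_pt_le1 l : s l <= 1.
Proof. rewrite <- s_pt_0. apply s_pt_antitone. lia. Qed.

Lemma s_pt_S_lt l : s (S l) < s l.
Proof. apply exp_increasing. rewrite S_INR. nra. Qed.

Lemma s_pt_small eps : 0 < eps -> exists N, s N < eps.
Proof.
  intros He. destruct (INR_unbounded (- ln eps / c1)) as [N HN]. exists N.
  rewrite <- (exp_ln eps) by lra. apply exp_increasing.
  apply Rmult_lt_reg_r with (/ c1); [now apply Rinv_0_lt_compat |].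
  replace (- INR N * c1 * / c1) with (- INR N) by (field; lra). unfold Rdiv in HN. lra.
Qed.

Lemma s_pt_bracket y : 0 < y <= 1 -> exists l, s (S l) < y <= s l.
Proof.
  intros Hy. destruct (s_pt_small y) as [N HN]; [lra |].
  induction N as [| N IH].
  - rewrite s_pt_0 in HN. lra.
  - destruct (Rlt_or_le (s N) y) as [h | h]; [now apply IH | now exists N].
Qed.

Lemma M1_bounds y : 0 < C0 -> C0 / 2 <= M y <= C0.
Proof.
  intros HC. unfold M1.
  assert (Hfr : 0 <= fracs (ln y / c1) < 1).
  { unfold fracs. destruct (Rlt_dec _ 0);
      [pose proof (base_fp (- (ln y / c1))) | pose proof (base_fp (ln y / c1))]; lra. }
  assert (Rpower 2 (- (1)) <= Rpower 2 (- fracs (ln y / c1)) <= Rpower 2 0)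
    by (split; apply Rle_Rpower; lra).
  set (z := Rpower 2 (- fracs (ln y / c1))) in *.
  rewrite Rpower_Ropp, Rpower_1, Rpower_O in * by lra. split; nra.
Qed.

(* On the piece (s (S l), s l] the fractional part in M1 is -(ln y / c1) - l,
   so f agrees there with a smooth function. *)
Definition fM1_branch (l : nat) (y : R) : R :=
  y * (1 + C0 * Rpower 2 (- (- (ln y / c1) - INR l)) * Rpower y alpha).

Lemma fM1_branch_continuous l y : 0 < y -> continuity_pt (fM1_branch l) y.
Proof.
  intros Hy. apply continuity_pt_filterlim.
  apply (@ex_derive_continuous R_AbsRing R_NormedModule).
  unfold fM1_branch, Rpower. auto_derive. repeat split; lra.
Qed.

Lemma fM1_branch_gt l y : 0 < C0 -> 0 < y -> y < fM1_branch l y.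
Proof.
  intros HC Hy. unfold fM1_branch.
  pose proof (Rpower_gt0 2 (- (- (ln y / c1) - INR l))). pose proof (Rpower_gt0 y alpha).
  assert (0 < C0 * Rpower 2 (- (- (ln y / c1) - INR l)) * Rpower y alpha)
    by (repeat apply Rmult_lt_0_compat; lra).
  nra.
Qed.

Lemma fM1_branch_expand l y : 0 < y ->
  fM1_branch l y = y + C0 * Rpower 2 (- (- (ln y / c1) - INR l)) * Rpower y (1 + alpha).
Proof. intros Hy. unfold fM1_branch. rewrite Rpower_plus, Rpower_1 by lra. ring. Qed.

Lemma fM1_branch_at_S l : fM1_branch l (s (S l)) = fminus (S l).
Proof.
  unfold f_minus. rewrite fM1_branch_expand by apply s_pt_gt0. rewrite ln_s_pt.
  replace (- (- (- INR (S l) * c1 / c1) - INR l)) with (- (1)) by (rewrite S_INR; field; lra).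
  rewrite Rpower_Ropp, Rpower_1 by lra. reflexivity.
Qed.

Lemma fM1_branch_at l : fM1_branch l (s l) = fplus l.
Proof.
  unfold f_plus. rewrite fM1_branch_expand by apply s_pt_gt0. rewrite ln_s_pt.
  replace (- (- (- INR l * c1 / c1) - INR l)) with 0 by (field; lra).
  rewrite Rpower_O by lra. ring.
Qed.

Lemma fM1_on_piece l y : s (S l) < y <= s l -> y <= 1 / 2 -> f y = fM1_branch l y.
Proof.
  intros Hy Hy2. pose proof (s_pt_gt0 (S l)).
  assert (Hl1 : ln y <= - INR l * c1) by (rewrite <- ln_s_pt; apply ln_le; lra).
  assert (Hl2 : - INR (S l) * c1 < ln y) by (rewrite <- ln_s_pt; apply ln_increasing; lra).
  rewrite S_INR in Hl2.
  assert (Hneg : ln y / c1 < 0).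
  { apply Rdiv_neg_pos; [| lra]. rewrite <- ln_1. apply ln_increasing; lra. }
  unfold fM1, fM1_branch, M1, fracs.
  destruct (Rle_dec y (1 / 2)) as [_ | ]; [| lra].
  destruct (Rlt_dec (ln y / c1) 0) as [_ | ]; [| lra].
  unfold frac_part. rewrite <- (Int_part_spec _ (Z.of_nat l)), <- INR_IZR_INZ; [reflexivity |].
  rewrite <- INR_IZR_INZ. split.
  - apply Rmult_lt_reg_r with c1; [lra |].
    replace ((- (ln y / c1) - 1) * c1) with (- ln y - c1) by (field; lra). nra.
  - apply Rmult_le_reg_r with c1; [lra |].
    replace (- (ln y / c1) * c1) with (- ln y) by (field; lra). nra.
Qed.

Lemma fM1_preimage_on_piece l a x : 0 < C0 -> s (S l) < a <= s l -> a <= 1 / 2 ->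
  fminus (S l) < x <= fM1_branch l a -> exists y, 0 < y < x /\ f y = x.
Proof.
  intros HC Ha Ha2 Hx. pose proof (s_pt_gt0 (S l)).
  assert (Hy : exists y, s (S l) < y <= a /\ fM1_branch l y = x).
  { destruct (Req_dec x (fM1_branch l a)) as [-> | ne]; [exists a; split; [lra | easy] |].
    destruct (IVT_interv (fun y => fM1_branch l y - x) (s (S l)) a) as [z [Hz1 Hz2]].
    - intros b Hb. apply (continuity_pt_minus (fM1_branch l) (fct_cte x));
        [apply fM1_branch_continuous; lra | apply continuity_pt_const; now intros ? ?].
    - lra.
    - rewrite fM1_branch_at_S. lra.
    - lra.
    - exists z. enough (z <> s (S l)) by lra.
      intros ->. rewrite fM1_branch_at_S in Hz2. lra. }
  destruct Hy as [y [Hy1 Hy2]]. exists y.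
  pose proof (fM1_branch_gt l y HC ltac:(lra)).
  rewrite fM1_on_piece with (l := l); lra.
Qed.

Lemma f_minus_le_f_plus l : 0 < C0 -> fminus l <= fplus l.
Proof. intros HC. unfold f_minus, f_plus. pose proof (Rpower_gt0 (s l) (1 + alpha)). nra. Qed.

Lemma f_minus_le l : 0 < C0 -> fminus l <= (1 + C0 / 2) * s l.
Proof.
  intros HC. unfold f_minus. pose proof (s_pt_gt0 l). pose proof (s_pt_le1 l).
  rewrite Rpower_plus, Rpower_1 by lra.
  assert (Rpower (s l) alpha <= 1) by (apply Rpower_le1; lra).
  assert (s l * Rpower (s l) alpha <= s l * 1) by (apply Rmult_le_compat_l; lra).
  nra.
Qed.

Hypothesis Hlim : limit1_in f (fun x => 0 <= x < 1 / 2) 1 (1 / 2).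

Lemma fM1_exceeds_half : exists y0, 0 < y0 < 1 / 2 /\ 1 / 2 < f y0.
Proof.
  destruct (Hlim (1 / 2)) as [d [Hd Hnear]]; [lra |].
  set (y0 := 1 / 2 - Rmin d (1 / 2) / 2).
  assert (0 < Rmin d (1 / 2) <= d /\ Rmin d (1 / 2) <= 1 / 2)
    by (split; [split; [apply Rmin_pos | apply Rmin_l] | apply Rmin_r]; lra).
  assert (Hf : R_dist (f y0) 1 < 1 / 2).
  { apply Hnear. simpl. unfold R_dist, y0. split; [lra | rewrite Rabs_left; lra]. }
  unfold R_dist in Hf. apply Rabs_def2 in Hf.
  exists y0. split; [unfold y0 |]; lra.
Qed.

Lemma C0_gt0 : 0 < C0.
Proof.
  destruct fM1_exceeds_half as [y [Hy Hfy]].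
  unfold fM1, M1 in Hfy. destruct (Rle_dec y (1 / 2)) as [_ | ]; [| lra].
  pose proof (Rpower_gt0 2 (- fracs (ln y / c1))). pose proof (Rpower_gt0 y alpha).
  destruct (Rlt_or_le 0 C0) as [| HC]; [easy |].
  assert (C0 * Rpower 2 (- fracs (ln y / c1)) * Rpower y alpha <= 0).
  { rewrite Rmult_assoc. assert (0 < Rpower 2 (- fracs (ln y / c1)) * Rpower y alpha)
      by now apply Rmult_lt_0_compat.
    nra. }
  nra.
Qed.

Definition next_pt_rel (x y : R) : Prop :=
  (exists l : nat, (1 <= l)%nat /\ fminus l <= x <= fplus l /\ y = s l)
  \/ (~ in_jump alpha c1 C0 x /\ 0 < y < x /\ f y = x).

Lemma next_pt_rel_exists x : 0 < x <= 1 / 2 -> exists y, next_pt_rel x y.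
Proof.
  intros Hx. pose proof C0_gt0 as HC.
  destruct (classic (in_jump alpha c1 C0 x)) as [[l [Hl1 Hl2]] | Hnj].
  { exists (s l). left. now exists l. }
  enough (exists y, 0 < y < x /\ f y = x) as [y Hy] by (exists y; now right).
  destruct fM1_exceeds_half as [y0 [Hy0 Hfy0]].
  destruct (s_pt_bracket y0) as [l0 Hl0]; [lra |].
  assert (Hpieces : forall k, fminus (S (l0 + k)) < x -> exists y, 0 < y < x /\ f y = x).
  { induction k as [| k IH]; intros Hk.
    - rewrite Nat.add_0_r in Hk. rewrite fM1_on_piece with (l := l0) in Hfy0 by lra.
      apply (fM1_preimage_on_piece l0 y0); lra.
    - destruct (Rlt_or_le (fminus (S (l0 + k))) x) as [h | h]; [now apply IH |].
      set (l := S (l0 + k)) in *. replace (S (l0 + S k)) with (S l) in Hk by lia.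
      pose proof (f_minus_le_f_plus l HC).
      pose proof (s_pt_antitone (S l0) l ltac:(lia)).
      apply (fM1_preimage_on_piece l (s l)); [easy | pose proof (s_pt_S_lt l); lra | lra |].
      rewrite fM1_branch_at. lra. }
  destruct (s_pt_small (x / (1 + C0 / 2))) as [N HN]; [apply Rdiv_lt_0_compat; lra |].
  apply (Hpieces N).
  pose proof (f_minus_le (S (l0 + N)) HC).
  pose proof (s_pt_antitone N (S (l0 + N)) ltac:(lia)).
  apply Rmult_lt_compat_l with (r := 1 + C0 / 2) in HN; [| lra].
  replace ((1 + C0 / 2) * (x / (1 + C0 / 2))) with x in HN by (field; lra).
  nra.
Qed.

Lemma next_pt_step x : 0 < x <= 1 / 2 ->
  let y := next_pt alpha c1 C0 x in
  0 < y < x /\ exists m, C0 / 2 <= m <= C0 /\ x = y * (1 + m * Rpower y alpha) /\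
                      (m = M y \/ exists l, y = s l).
Proof.
  intros Hx y. pose proof C0_gt0 as HC.
  assert (Hrel : next_pt_rel x y)
    by exact (epsilon_spec (inhabits 0) (next_pt_rel x) (next_pt_rel_exists x Hx)).
  destruct Hrel as [[l [_ [[Hl1 Hl2] ->]]] | [_ [Hy Hfy]]].
  - unfold f_minus, f_plus in *. pose proof (s_pt_gt0 l).
    rewrite Rpower_plus, Rpower_1 in * by lra.
    assert (Hv : 0 < s l * Rpower (s l) alpha)
      by (apply Rmult_lt_0_compat; apply Rpower_gt0 || lra).
    split; [nra |].
    exists ((x - s l) / (s l * Rpower (s l) alpha)).
    set (v := s l * Rpower (s l) alpha) in *.
    assert (Hm : (x - s l) / v * v = x - s l) by (field; lra).
    split; [split; apply Rmult_le_reg_r with v; lra |].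
    split; [| right; now exists l].
    replace (s l * (1 + (x - s l) / v * Rpower (s l) alpha)) with (s l + (x - s l) / v * v)
      by (unfold v; ring).
    lra.
  - split; [easy |]. exists (M y).
    split; [now apply M1_bounds | split; [| now left]].
    rewrite <- Hfy. unfold fM1. destruct (Rle_dec y (1 / 2)); [easy | lra].
Qed.

Local Notation xs := (xseq alpha c1 C0).
Local Notation u n := (Rpower (xs n) (- alpha)).

Lemma xseq_range n : 0 < xs n <= 1 / 2.
Proof.
  induction n as [| n IH]; [simpl; lra |].
  destruct (next_pt_step (xs n) IH) as [H _]. simpl. lra.
Qed.

(* Counts the jumps of the orbit: it is nondecreasing along the orbit and grows by at
   least one at each visit to a discontinuity point. *)
Definition piece_index (x : R) : R := IZR (up (- ln x / c1)).

Lemma piece_index_antitone x y : 0 < y <= x -> piece_index x <= piece_index y.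
Proof.
  intros Hxy. unfold piece_index.
  assert (Hr : - ln x / c1 <= - ln y / c1).
  { apply Rmult_le_compat_r; [left; now apply Rinv_0_lt_compat |].
    pose proof (ln_le y x). lra. }
  destruct (archimed (- ln x / c1)), (archimed (- ln y / c1)).
  apply IZR_le. apply Z.lt_succ_r, lt_IZR. rewrite succ_IZR. lra.
Qed.

Lemma piece_index_jump x l : s l < x -> piece_index x + 1 <= piece_index (s l).
Proof.
  intros Hx. unfold piece_index. rewrite ln_s_pt.
  replace (- (- INR l * c1) / c1) with (INR l) by (field; lra).
  assert (Hr : - ln x / c1 < INR l).
  { pose proof (ln_increasing _ _ (s_pt_gt0 l) Hx) as H. rewrite ln_s_pt in H.
    apply Rmult_lt_reg_r with c1; [lra |]. unfold Rdiv. rewrite Rmult_assoc, Rinv_l; lra. }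
  rewrite <- (tech_up (INR l) (Z.of_nat l + 1)) by (rewrite plus_IZR, <- INR_IZR_INZ; lra).
  destruct (archimed (- ln x / c1)).
  rewrite <- plus_IZR. apply IZR_le, Z.add_le_mono_r, Z.lt_succ_r, lt_IZR.
  rewrite succ_IZR, <- INR_IZR_INZ. lra.
Qed.

Lemma piece_index_bounds x : 0 < x <= 1 -> 0 <= piece_index x <= - ln x / c1 + 1.
Proof.
  intros Hx. unfold piece_index. destruct (archimed (- ln x / c1)) as [Hup1 Hup2].
  enough (0 <= - ln x / c1) by lra.
  apply Rdiv_le_0_compat; [| lra].
  pose proof (ln_le x 1 ltac:(lra) ltac:(lra)) as Hln. rewrite ln_1 in Hln. lra.
Qed.

Lemma piece_index_xseq_mono j : piece_index (xs j) <= piece_index (xs (S j)).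
Proof.
  apply piece_index_antitone. destruct (next_pt_step (xs j) (xseq_range j)) as [H _]. simpl. lra.
Qed.

Definition delta : R := alpha * (C0 / 2) * Rpower (1 + C0) (- (2)).

Lemma delta_gt0 : 0 < delta.
Proof.
  pose proof C0_gt0. pose proof (Rpower_gt0 (1 + C0) (- (2))).
  unfold delta. repeat apply Rmult_lt_0_compat; lra.
Qed.

Lemma u_increment j :
  delta <= u (S j) - u j <= alpha * C0 /\
  Rabs (u (S j) - u j - alpha * M (xs (S j))) <=
    alpha * C0 / 2 * (piece_index (xs (S j)) - piece_index (xs j))
    + alpha * (alpha + 1) * C0 ^ 2 * Rpower (xs (S j)) alpha.
Proof.
  pose proof C0_gt0 as HC. pose proof (piece_index_xseq_mono j) as Hmono.
  pose proof (xseq_range j).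
  destruct (next_pt_step (xs j) (xseq_range j)) as [Hy [m [Hm [Hx Hcase]]]].
  change (next_pt alpha c1 C0 (xs j)) with (xs (S j)) in *.
  destruct (Rpower_opp_increment alpha C0 m (xs (S j)) Halpha HC Hm ltac:(lra)) as [Hd Hlb].
  rewrite <- Hx in Hd, Hlb.
  assert (Hjump : Rabs (m - M (xs (S j)))
                  <= C0 / 2 * (piece_index (xs (S j)) - piece_index (xs j))).
  { pose proof (M1_bounds (xs (S j)) HC).
    destruct Hcase as [-> | [l Hl]]; [rewrite Rminus_diag, Rabs_R0; nra |].
    assert (piece_index (xs j) + 1 <= piece_index (xs (S j)))
      by (rewrite Hl in *; apply piece_index_jump; lra).
    assert (C0 / 2 <= C0 / 2 * (piece_index (xs (S j)) - piece_index (xs j)))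
      by (rewrite <- (Rmult_1_r (C0 / 2)) at 1; apply Rmult_le_compat_l; lra).
    apply Rabs_le. lra. }
  split; [unfold delta; nra |].
  replace (u (S j) - u j - alpha * M (xs (S j)))
    with ((u (S j) - u j - alpha * m) + alpha * (m - M (xs (S j)))) by ring.
  eapply Rle_trans; [apply Rabs_triang |].
  rewrite Rabs_mult, (Rabs_pos_eq alpha) by lra.
  assert (Rabs (u (S j) - u j - alpha * m)
          <= alpha * (alpha + 1) * C0 ^ 2 * Rpower (xs (S j)) alpha)
    by (apply Rabs_le; lra).
  nra.
Qed.

Lemma u_linear_bounds n : u 0 + delta * INR n <= u n <= u 0 + alpha * C0 * INR n.
Proof.
  induction n as [| n IH]; [simpl; lra |].
  destruct (u_increment n) as [Hd _]. rewrite S_INR. lra.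
Qed.

Definition M1_sum (m : nat) : R := sum_f_R0 (fun j => M (xs (S j))) m.
Definition xpow_sum (m : nat) : R := sum_f_R0 (fun j => Rpower (xs (S j)) alpha) m.

Lemma u_sum_approx m :
  Rabs (u (S m) - u 0 - alpha * M1_sum m) <=
    alpha * C0 / 2 * (piece_index (xs (S m)) - piece_index (xs 0))
    + alpha * (alpha + 1) * C0 ^ 2 * xpow_sum m.
Proof.
  unfold M1_sum, xpow_sum. induction m as [| m IH].
  - exact (proj2 (u_increment 0)).
  - destruct (u_increment (S m)) as [_ Hstep]. cbn [sum_f_R0].
    replace (u (S (S m)) - u 0 - alpha * (sum_f_R0 (fun j => M (xs (S j))) m + M (xs (S (S m)))))
      with ((u (S m) - u 0 - alpha * sum_f_R0 (fun j => M (xs (S j))) m)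
            + (u (S (S m)) - u (S m) - alpha * M (xs (S (S m))))) by ring.
    eapply Rle_trans; [apply Rabs_triang | lra].
Qed.

(* x_j^alpha = 1 / u_j <= 1 / (delta j), so the sum is harmonic. *)
Lemma xpow_sum_le m : xpow_sum m <= / delta * (1 + ln (INR (S m))).
Proof.
  pose proof delta_gt0. pose proof (Rpower_gt0 (xs 0) (- alpha)).
  apply Rle_trans with (sum_f_R0 (fun j => / INR (S j) * / delta) m).
  - apply sum_Rle. intros j _.
    destruct (u_linear_bounds (S j)) as [Hl _].
    pose proof (lt_0_INR (S j) ltac:(lia)).
    rewrite <- Rinv_mult, Rmult_comm, <- (Rinv_inv (Rpower (xs (S j)) alpha)), <- Rpower_Ropp.
    apply Rinv_le_contravar; [apply Rmult_lt_0_compat |]; lra.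
  - rewrite <- scal_sum. apply Rmult_le_compat_l; [left; now apply Rinv_0_lt_compat |].
    apply harmonic_le_ln.
Qed.

Lemma M0_mul_INR m : M0 alpha c1 C0 (S m) * INR (S m) = M1_sum m.
Proof.
  unfold M0, M1_sum. simpl pred. field. apply not_0_INR. lia.
Qed.

Lemma M1_sum_lower m : C0 / 2 * INR (S m) <= M1_sum m.
Proof.
  pose proof C0_gt0 as HC. unfold M1_sum.
  induction m as [| m IH]; cbn [sum_f_R0].
  - pose proof (M1_bounds (xs 1) HC). simpl INR. lra.
  - pose proof (M1_bounds (xs (S (S m))) HC). rewrite S_INR. lra.
Qed.

Lemma piece_index_growth :
  exists K, forall n, (3 <= n)%nat -> piece_index (xs n) - piece_index (xs 0) <= K * ln (INR n).
Proof.
  pose proof C0_gt0 as HC. pose proof (Rpower_gt0 (xs 0) (- alpha)).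
  set (B := u 0 + alpha * C0).
  assert (HB : 0 < B) by (unfold B; nra).
  exists ((Rabs (ln B) + 1) / (alpha * c1) + 1). intros n Hn.
  pose proof (ln_INR_ge1 n Hn) as Hln.
  assert (Hn1 : 1 <= INR n) by (apply (le_INR 1); lia).
  pose proof (xseq_range n). pose proof (xseq_range 0).
  destruct (piece_index_bounds (xs 0)) as [HP0 _]; [lra |].
  destruct (piece_index_bounds (xs n)) as [_ HPn]; [lra |].
  assert (Hlnu : ln (u n) <= ln B + ln (INR n)).
  { rewrite <- ln_mult by lra. apply ln_le; [apply Rpower_gt0 |].
    destruct (u_linear_bounds n) as [_ Hu]. unfold B. nra. }
  rewrite ln_Rpower in Hlnu.
  replace (- ln (xs n) / c1) with (- alpha * ln (xs n) / (alpha * c1)) in HPn by (field; lra).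
  assert (Hdiv : - alpha * ln (xs n) / (alpha * c1)
                 <= (Rabs (ln B) + 1) * ln (INR n) / (alpha * c1)).
  { apply Rmult_le_compat_r; [left; apply Rinv_0_lt_compat; nra |].
    pose proof (Rle_abs (ln B)). pose proof (Rabs_pos (ln B)). nra. }
  unfold Rdiv in *. nra.
Qed.

Lemma u_minus_M0_bound :
  exists K, forall n, (3 <= n)%nat ->
    Rabs (u n - alpha * M0 alpha c1 C0 n * INR n) <= K * ln (INR n).
Proof.
  pose proof C0_gt0 as HC. pose proof delta_gt0 as Hd.
  destruct piece_index_growth as [Kp HKp].
  set (K1 := alpha * (alpha + 1) * C0 ^ 2).
  assert (HK1 : 0 <= K1) by (unfold K1; pose proof (pow2_ge_0 C0); nra).
  exists (alpha * C0 / 2 * Kp + 2 * K1 / delta + u 0). intros [| m] Hn; [lia |].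
  pose proof (ln_INR_ge1 _ Hn) as Hln. pose proof (Rpower_gt0 (xs 0) (- alpha)).
  rewrite Rmult_assoc, M0_mul_INR.
  pose proof (u_sum_approx m) as Happrox. fold K1 in Happrox.
  assert (Hpow : K1 * xpow_sum m <= 2 * K1 / delta * ln (INR (S m))).
  { eapply Rle_trans; [apply Rmult_le_compat_l; [easy | apply xpow_sum_le] |].
    replace (2 * K1 / delta * ln (INR (S m))) with (K1 * (/ delta * (2 * ln (INR (S m)))))
      by (field; lra).
    apply Rmult_le_compat_l; [easy |].
    apply Rmult_le_compat_l; [left; now apply Rinv_0_lt_compat | lra]. }
  assert (Hpiece : alpha * C0 / 2 * (piece_index (xs (S m)) - piece_index (xs 0))
                   <= alpha * C0 / 2 * (Kp * ln (INR (S m))))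
    by (apply Rmult_le_compat_l; [nra | now apply HKp]).
  replace (u (S m) - alpha * M1_sum m) with ((u (S m) - u 0 - alpha * M1_sum m) + u 0) by ring.
  eapply Rle_trans; [apply Rabs_triang |]. rewrite (Rabs_pos_eq (u 0)) by lra.
  nra.
Qed.

Lemma u_lower n : delta * INR n <= u n.
Proof.
  destruct (u_linear_bounds n) as [Hl _]. pose proof (Rpower_gt0 (xs 0) (- alpha)). lra.
Qed.

Lemma alpha_M0_lower m : delta * INR (S m) <= alpha * M0 alpha c1 C0 (S m) * INR (S m).
Proof.
  pose proof C0_gt0. pose proof (M1_sum_lower m). pose proof (pos_INR (S m)).
  rewrite Rmult_assoc, M0_mul_INR.
  assert (Rpower (1 + C0) (- (2)) <= 1) by (apply Rpower_opp_le1; lra).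
  unfold delta. apply Rle_trans with (alpha * (C0 / 2) * INR (S m)).
  - apply Rmult_le_compat_r; [lra |]. rewrite <- (Rmult_1_r (alpha * (C0 / 2))) at 2.
    apply Rmult_le_compat_l; nra.
  - rewrite Rmult_assoc. apply Rmult_le_compat_l; lra.
Qed.

End BackwardOrbit.

Theorem proposition4p1 (alpha c1 C0 : R)
  (Halpha : 0 < alpha < 1) (Hc1 : 0 < c1)
  (HC0 : limit1_in (fM1 alpha c1 C0) (fun x => 0 <= x < 1/2) 1 (1/2)) :
  exists K : R, exists N : nat, forall n : nat, (N <= n)%nat ->
    Rabs (xseq alpha c1 C0 n
          - / Rpower (alpha * M0 alpha c1 C0 n * INR n) (1 / alpha))
    <= K * (ln (INR n) / Rpower (INR n) (1 + 1 / alpha)).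
Proof.
  destruct (u_minus_M0_bound alpha c1 C0 Halpha Hc1 HC0) as [K HK].
  pose proof (delta_gt0 alpha c1 C0 Halpha HC0) as Hd.
  set (q := 1 / alpha).
  assert (Hq : 0 < q) by (apply Rdiv_lt_0_compat; lra).
  exists (q * Rpower (delta alpha C0) (- q - 1) * K), 3%nat. intros [| m] Hn; [lia |].
  pose proof (alpha_M0_lower alpha c1 C0 Halpha HC0 m) as HW.
  pose proof (u_lower alpha c1 C0 Halpha Hc1 HC0 (S m)) as HU.
  set (d := delta alpha C0) in *.
  pose proof (xseq_range alpha c1 C0 Halpha Hc1 HC0 (S m)).
  specialize (HK (S m) Hn).
  set (n := S m) in *. set (W := alpha * M0 alpha c1 C0 n * INR n) in *.
  set (U := Rpower (xseq alpha c1 C0 n) (- alpha)) in *.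
  assert (Hn0 : 0 < INR n) by (apply lt_0_INR; lia).
  (* x_n = U^(-q), and U, W >= d n, where t^(-q) is (q (d n)^(-q-1))-Lipschitz *)
  replace (xseq alpha c1 C0 n) with (Rpower U (- q)) by (apply Rpower_opp_involutive; lra).
  rewrite <- Rpower_Ropp.
  eapply Rle_trans; [apply (Rpower_opp_lipschitz q W U (d * INR n)); nra |].
  rewrite <- Rpower_mult_distr by lra.
  unfold Rdiv. rewrite <- Rpower_Ropp. replace (- (1 + q)) with (- q - 1) by ring.
  pose proof (Rpower_gt0 d (- q - 1)). pose proof (Rpower_gt0 (INR n) (- q - 1)).
  apply Rle_trans with (q * (Rpower d (- q - 1) * Rpower (INR n) (- q - 1)) * (K * ln (INR n))).
  - apply Rmult_le_compat_l; [| easy]. apply Rmult_le_pos; [lra |]. apply Rmult_le_pos; lra.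
  - right. ring.
Qed.
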